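(* Let $\rho\in C_1(\widetilde\Gamma,\widetilde H;\mathbb{Q})$ be a non-geometric Nielsen 1-chain for $f$ relative to $H$. There is a constant $B\ge1$ such that for all pairwise distinct $g_1,\dots,g_r\in\mathbb{F}$, all $q_1,\dots,q_r\in\mathbb{Q}$, $x=q_1g_1\rho+\cdots+q_rg_r\rho$, and all $k\ge0$, $$\sum_{j=1}^rq_j^2\le\|A_{f,H}^k(x)\|^2\le B\sum_{j=1}^rq_j^2.$$
   Context: Setup: $\mathbb{F}$ finitely generated free, $\Gamma$ a finite connected graph with $\pi_1(\Gamma)\cong\mathbb{F}$, $f$ a homotopy equivalence, cellular and edge-linear, $H\subset\Gamma$ a subgraph with $f(H)\subseteq H$, $\widetilde\Gamma$ the universal cover with deck action of $\mathbb{F}$, $\widetilde H$ the preimage of $H$, $\tilde f$ a fixed lift with $\tilde f(gz)=\Phi_f(g)\tilde f(z)$. $C_1(\widetilde\Gamma;\mathbb{Q})$: finitely supported rational 1-chains $x=\sum_ex_ee$; $A_f$ induced by $\tilde f$; $C_1(\widetilde\Gamma,\widetilde H;\mathbb{Q})$ chains vanishing on edges of $\widetilde H$; $\pi_H^\perp$ the projection onto it; $A_{f,H}=\pi_H^\perp\circ A_f|_{C_1(\widetilde\Gamma,\widetilde H;\mathbb Q)}$; $\|x\|^2=\sum_ex_e^2$. $[u,v]$ is the 1-chain of the reduced edge-path from $u$ to $v$ (coefficients $\pm1$ on its edges). A non-geometric Nielsen 1-chain is $\rho=\pi_H^\perp([u,v])$ with $u,v$ vertices fixed by $\tilde f$ such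 that some edge $e\notin\widetilde H$ has $\rho_e=\pm1$ and $\rho_{ge}=0$ for every nontrivial $g\in\mathbb{F}$. (Note $A_{f,H}(g\rho)=\Phi_f(g)\rho$.) *)

(* Combinatorial model of a finite graph Gamma, its universal
   cover (tree of reduced walks from a base vertex), the deck action of
   F = pi_1(Gamma, v0), rational 1-chains, a lift of f and A_{f,H}. *)
From mathcomp Require Import all_boot all_order all_algebra.
Set Implicit Arguments. Unset Strict Implicit. Unset Printing Implicit Defensive.
Import Order.TTheory GRing.Theory Num.Theory.
Local Open Scope ring_scope.

Section Graph.
Variables (V E : finType) (src tgt : E -> V).

(* directed edges: (e, true) traverses e from src to tgt, (e,false) backwards *)
Definition dedge := (E * bool)%type.
Definition dorg (d : dedge) : V := if d.2 then src d.1 else tgt d.1.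
Definition dter (d : dedge) : V := if d.2 then tgt d.1 else src d.1.
Definition dinv (d : dedge) : dedge := (d.1, ~~ d.2).

Fixpoint is_walk_from (u : V) (w : seq dedge) : bool :=
  if w is d :: w' then (dorg d == u) && is_walk_from (dter d) w' else true.
Definition wend (u : V) (w : seq dedge) : V := last u (map dter w).
Definition is_walk (u v : V) (w : seq dedge) := is_walk_from u w && (wend u w == v).

Definition winv (w : seq dedge) : seq dedge := rev (map dinv w).

Fixpoint reduced (w : seq dedge) : bool :=
  if w is d :: w' then
    (if w' is d' :: _ then d' != dinv d else true) && reduced w'
  else true.

Fixpoint red (w : seq dedge) : seq dedge :=
  if w is d :: w' then
    let r := red w' in
    if r is d' :: r' then (if d' == dinv d then r' else d :: r) else [:: d]
  else [::].

Definition connected_graph := forall u v : V, exists w, is_walk u v w.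

Variable v0 : V.

(* F = pi_1(Gamma, v0) as reduced closed paths at v0 (identity [::],
   product red (g ++ h)) *)
Definition Fgrp (g : seq dedge) : bool := is_walk v0 v0 g && reduced g.

(* vertices of the universal cover: reduced paths starting at v0 *)
Definition tvert (p : seq dedge) : bool := is_walk_from v0 p && reduced p.

Definition act (g p : seq dedge) : seq dedge := red (g ++ p).

(* edges of the universal cover: (p, e) is the lift of e (oriented src->tgt)
   starting at the tree vertex p *)
Definition tedge := (seq dedge * E)%type.

(* finitely supported rational 1-chains, as formal sums *)
Definition chain := seq (tedge * rat).
Definition coef (x : chain) (t : tedge) : rat := \sum_(a <- x | a.1 == t) a.2.
Definition norm2 (x : chain) : rat := \sum_(t <- undup (map fst x)) coef x t ^+ 2.
Definition cscale (c : rat) (x : chain) : chain := map (fun a => (a.1, c * a.2)) x.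
Definition cact (g : seq dedge) (x : chain) : chain :=
  map (fun a => ((act g a.1.1, a.1.2), a.2)) x.

(* 1-chain of the lift, starting at tree vertex p, of the edge path w *)
Fixpoint wchain (p : seq dedge) (w : seq dedge) : chain :=
  if w is d :: w' then
    let p' := red (rcons p d) in
    (if d.2 then ((p, d.1), 1%R) else ((p', d.1), (-1)%R)) :: wchain p' w'
  else [::].

(* [u, v] : chain of the reduced edge path from u to v in the tree *)
Definition seg (u v : seq dedge) : chain := wchain u (red (winv u ++ v)).

Variable HE : {set E}.
(* projection onto C_1(tilde Gamma, tilde H; Q) *)
Definition projH (x : chain) : chain := filter (fun a => a.1.2 \notin HE) x.

(* the map f : vertices fV, edge e |-> edge path fE e *)
Variables (fV : V -> V) (fE : E -> seq dedge).
Definition fw (w : seq dedge) : seq dedge :=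
  flatten (map (fun d => if d.2 then fE d.1 else winv (fE d.1)) w).

(* lift of f determined by a path gam from v0 to fV v0 *)
Variable gam : seq dedge.
Definition ftilde (p : seq dedge) : seq dedge := red (gam ++ fw p).
Definition Phi (g : seq dedge) : seq dedge := red (gam ++ fw g ++ winv gam).

Definition Af (x : chain) : chain :=
  flatten (map (fun a => cscale a.2 (wchain (ftilde a.1.1) (fE a.1.2))) x).
Definition AfH (x : chain) : chain := projH (Af x).

End Graph.

(* Lemma 5.2: translates of a non-geometric Nielsen 1-chain rho stay
   orthogonal under iteration of A_{f,H}.
   (1) A_{f,H} rho = rho: A_f maps the chain of a lifted path w starting at p
       to the chain of the lifted path f(w) starting at tilde f(p), and path
       chains only depend on free reduction, so A_f [u,v] = [u,v]; edges of H
       go into H, so the projection pi_H^perp commutes with A_f on rho.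
   (2) A_f (g x) = Phi_f(g) A_f(x), hence A_{f,H}^k (sum_j q_j g_j rho) =
       sum_j q_j h_j rho with h_j = Phi_f^k(g_j), still pairwise distinct.
   (3) For distinct h_j and y = sum_j q_j h_j rho, the coefficient of y at
       h_j t0 is +-q_j (lower bound), and every coefficient of y is a sum of
       at most N terms, N the support size of rho, so Cauchy-Schwarz gives
       ||y||^2 <= N ||rho||^2 sum_j q_j^2 (upper bound).
   Chains are finite formal sums compared through their pairing with test
   functions ([sumL]). *)

From mathcomp Require Import all_boot all_order all_algebra.
From mathcomp Require Import zify ring lra.
Import Order.TTheory GRing.Theory Num.Theory.
Local Open Scope ring_scope.
Set Implicit Arguments. Unset Strict Implicit. Unset Printing Implicit Defensive.

(* Free reduction of edge paths: the group structure of reduced words that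
   underlies both pi_1 and the vertex set of the universal cover. *)
Section FreeReduction.
Variable E : finType.
Notation D := (dedge E).
Implicit Types (d : D) (w a b c p t : seq D).

(* [red] pushes one letter at a time onto an already reduced word. *)
Definition cr d (r : seq D) : seq D :=
  if r is d' :: r' then (if d' == dinv d then r' else d :: r) else [:: d].

Lemma red_cons d w : red (d :: w) = cr d (red w).
Proof. by []. Qed.

Lemma dinvK d : dinv (dinv d) = d.
Proof. by case: d => e []. Qed.

Lemma reduced_cons d r :
  reduced (d :: r) = (if r is d' :: _ then d' != dinv d else true) && reduced r.
Proof. by []. Qed.

Lemma cr_reduced d r : reduced r -> reduced (cr d r).
Proof.
case: r => [|d' r] //= /andP[h1 h2].
by case: ifP => [_|ne] //=; rewrite ne h1 h2.
Qed.

Lemma red_reduced w : reduced (red w).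
Proof. by elim: w => [|d w IH] //=; apply: cr_reduced. Qed.

Lemma red_id w : reduced w -> red w = w.
Proof.
elim: w => [|d w IH] // Hr; rewrite red_cons.
move: Hr; rewrite reduced_cons => /andP[h1 h2]; rewrite IH //.
by case: w h1 {IH h2} => [|d' w] //= /negPf ->.
Qed.

Lemma redK w : red (red w) = red w.
Proof. exact/red_id/red_reduced. Qed.

Lemma crK d r : reduced r -> cr d (cr (dinv d) r) = r.
Proof.
rewrite /cr; case: r => [|d' r] /=; first by rewrite eqxx.
move=> /andP[h1 h2]; case: ifP => [/eqP Ed|ne] /=; last by rewrite eqxx.
rewrite dinvK in Ed; subst d'.
by case: r h1 h2 => [|x r] //= /negPf ->.
Qed.

Lemma red_cat a b : red (a ++ b) = foldr cr (red b) a.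
Proof. by elim: a => [|d a IH] //=; rewrite IH. Qed.

Lemma redRK a b : red (a ++ red b) = red (a ++ b).
Proof. by rewrite !red_cat redK. Qed.

Lemma red_cancel a d b : red (a ++ d :: dinv d :: b) = red (a ++ b).
Proof. by rewrite !red_cat !red_cons crK // red_reduced. Qed.

Lemma redLK a b : red (red a ++ b) = red (a ++ b).
Proof.
elim: a => [|x a IH] //.
rewrite red_cons cat_cons red_cons -IH.
have := red_reduced a; case: (red a) => [|y a'] Hr //.
rewrite [cr x (y :: a')]/cr; case: ifP => [/eqP ey|ne].
  by rewrite cat_cons red_cons ey crK // red_reduced.
by rewrite !cat_cons !red_cons.
Qed.

Lemma winv_cat a b : winv (a ++ b) = winv b ++ winv a.
Proof. by rewrite /winv map_cat rev_cat. Qed.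

Lemma winvK a : winv (winv a) = a.
Proof. by rewrite /winv map_rev revK -map_comp (eq_map dinvK) map_id. Qed.

Lemma winv_cons d a : winv (d :: a) = winv a ++ [:: dinv d].
Proof. by rewrite /winv /= rev_cons cats1. Qed.

Lemma red_winvL a : red (winv a ++ a) = [::].
Proof.
elim: a => [|d a IH] //.
by rewrite winv_cons -catA /= -{2}[d]dinvK red_cancel.
Qed.

Lemma red_cancelL a b c : red (a ++ winv b ++ b ++ c) = red (a ++ c).
Proof.
by rewrite -redRK (catA (winv b)) -(redLK (winv b ++ b)) red_winvL /= redRK.
Qed.

Lemma red_cancelR a b c : red (a ++ b ++ winv b ++ c) = red (a ++ c).
Proof. by rewrite -{1}[b]winvK red_cancelL. Qed.

Lemma red_winv_red a b : red (winv (red a) ++ b) = red (winv a ++ b).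
Proof.
rewrite -[RHS](red_cancelL [::] (red a)) /=.
by rewrite -[RHS]redRK redLK (red_cancelR [::]) /= redRK.
Qed.

Lemma not_reduced w : ~~ reduced w -> exists a d b, w = a ++ d :: dinv d :: b.
Proof.
elim: w => [|x w IH] //; rewrite reduced_cons negb_and => /orP[].
  by case: w {IH} => [|y w] //; rewrite negbK => /eqP ->; exists [::], x, w.
by move=> /IH [a [d [b ->]]]; exists (x :: a), d, b.
Qed.

Lemma red_invariant (R : Type) (Q : seq D -> R) :
  (forall a d b, Q (a ++ d :: dinv d :: b) = Q (a ++ b)) ->
  forall w, Q (red w) = Q w.
Proof.
move=> HQ w; have [n] := ubnP (size w); elim: n w => [|n IH] w // Hs.
case Hr: (reduced w); first by rewrite red_id.
have [a [d [b Ew]]] := not_reduced (negbT Hr).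
rewrite Ew red_cancel HQ IH //.
by move: Hs; rewrite Ew !size_cat /= ltnS; lia.
Qed.

Lemma red_winv_nil a b : reduced a -> reduced b -> red (winv a ++ b) = [::] -> a = b.
Proof.
move=> ha hb h.
by rewrite -(red_id hb) -(red_cancelR [::] a) /= -redRK h cats0 red_id.
Qed.

Lemma winv_red_inj a b : reduced a -> reduced b -> red (winv a) = red (winv b) -> a = b.
Proof.
move=> ha hb h.
have inv2 c : reduced c -> c = red (winv (red (winv c))).
  by move=> hc; rewrite -[winv _]cats0 red_winv_red cats0 winvK red_id.
by rewrite (inv2 a) // (inv2 b) // h.
Qed.

Lemma act_comp g h p : act g (act h p) = act (red (g ++ h)) p.
Proof. by rewrite /act redRK redLK catA. Qed.

Lemma act_invK g p : reduced p -> act (winv g) (act g p) = p.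
Proof. by move=> Hp; rewrite /act redRK (red_cancelL [::]) /= red_id. Qed.

Lemma act_Kinv g p : reduced p -> act g (act (winv g) p) = p.
Proof. by move=> Hp; rewrite -{1}[g]winvK act_invK. Qed.

Lemma act_eq_iff g p t : reduced p -> reduced t -> (act g p == t) = (p == act (winv g) t).
Proof.
move=> hp ht; apply/eqP/eqP => [<-|->]; first by rewrite act_invK.
by rewrite act_Kinv.
Qed.

Lemma act_eq_red g h t : act g t = act h t -> red g = red h.
Proof.
move=> e.
have back x : red x = red (red (x ++ t) ++ winv t).
  by rewrite redLK -catA -(cats0 (winv t)) red_cancelR cats0.
by rewrite back (e : red (g ++ t) = red (h ++ t)) -back.
Qed.

End FreeReduction.


(* Paths in Gamma and the induced map Phi_f on pi_1(Gamma, v0). *)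
Section Walks.
Variables (V E : finType) (src tgt : E -> V).
Notation D := (dedge E).
Implicit Types (d : D) (w a b : seq D).

(* Propositional form of [is_walk], convenient for concatenation. *)
Fixpoint iw (u v : V) w : Prop :=
  if w is d :: w' then dorg src tgt d = u /\ iw (dter src tgt d) v w' else u = v.

Lemma iwP u v w : is_walk src tgt u v w <-> iw u v w.
Proof.
rewrite /is_walk /wend; elim: w u => [|d w IH] u /=; first by split => [/eqP|->].
rewrite -IH; split; first by move=> /andP[/andP[/eqP -> ->] ->].
by move=> [-> /andP[-> ->]]; rewrite eqxx.
Qed.

Lemma iw_cat u v z a b : iw u v a -> iw v z b -> iw u z (a ++ b).
Proof. by elim: a u => [|d a IH] u /= => [->|[-> h1] h2] //; split => //; apply: IH. Qed.

Lemma iw_winv u v a : iw u v a -> iw v u (winv a).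
Proof.
elim: a u => [|d a IH] u /=; first by move=> ->.
move=> [<- h]; rewrite winv_cons; apply: iw_cat (IH _ h) _.
by case: d {h} => e [].
Qed.

Lemma iw_red u v a : iw u v a -> iw u v (red a).
Proof.
elim: a u => [|d a IH] u //= [Hd /IH]; rewrite -/(red a) /cr.
case: (red a) => [|d' r] /=; first by move=> ->.
case: ifP => [/eqP -> [_ h]|_ h] //.
by move: h; rewrite -Hd; case: d {Hd} => e [].
Qed.

Lemma FgrpP v0 g : Fgrp src tgt v0 g <-> iw v0 v0 g /\ reduced g.
Proof. by rewrite /Fgrp; split => [/andP[/iwP h ->]|[/iwP -> ->]]. Qed.

Lemma diff_Fgrp v0 a b : Fgrp src tgt v0 a -> Fgrp src tgt v0 b ->
  Fgrp src tgt v0 (red (winv a ++ b)).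
Proof.
move=> /FgrpP [ha _] /FgrpP [hb _]; apply/FgrpP; split; last exact: red_reduced.
by apply: iw_red; apply: iw_cat (iw_winv ha) hb.
Qed.

Variables (fV : V -> V) (fE : E -> seq D) (v0 : V) (gam : seq D).
Hypothesis HfE : forall e, is_walk src tgt (fV (src e)) (fV (tgt e)) (fE e).
Hypothesis Hgam : is_walk src tgt v0 (fV v0) gam.

Lemma iw_fw u v a : iw u v a -> iw (fV u) (fV v) (fw fE a).
Proof.
elim: a u => [|d a IH] u /=; first by move=> ->.
move=> [<- h]; rewrite -/(fw fE a); apply: iw_cat (IH _ h).
by case: d {h} => e [] /=; [|apply: iw_winv]; apply/iwP/HfE.
Qed.

Lemma Phi_Fgrp g : Fgrp src tgt v0 g -> Fgrp src tgt v0 (Phi fE gam g).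
Proof.
move=> /FgrpP [h _]; apply/FgrpP; split; last exact: red_reduced.
apply: iw_red; apply: iw_cat (iffLR (iwP _ _ _) Hgam) _.
by apply: iw_cat (iw_fw h) _; apply: iw_winv; apply/iwP.
Qed.

Lemma iter_Phi_Fgrp k g : Fgrp src tgt v0 g -> Fgrp src tgt v0 (iter k (Phi fE gam) g).
Proof. by elim: k => [|k IH] //= /IH /Phi_Fgrp. Qed.

Lemma iter_Phi_inj k g h :
  (forall a b, Fgrp src tgt v0 a -> Fgrp src tgt v0 b -> Phi fE gam a = Phi fE gam b -> a = b) ->
  Fgrp src tgt v0 g -> Fgrp src tgt v0 h ->
  iter k (Phi fE gam) g = iter k (Phi fE gam) h -> g = h.
Proof.
move=> Pinj; elim: k g h => [|k IH] g h hg hh //= e.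
by apply: IH => //; apply: Pinj => //; apply: iter_Phi_Fgrp.
Qed.

End Walks.


(* Chains as linear functionals: [sumL x H] pairs the formal sum x with the
   test function H, and [ceq x y] says x and y represent the same chain. *)
Section Chains.
Variable E : finType.
Notation T := (tedge E).
Notation C := (chain E).
Implicit Types (x y : C) (H : T -> rat).

Definition sumL x H := \sum_(a <- x) a.2 * H a.1.
Definition ceq x y := forall H, sumL x H = sumL y H.

Definition on_tree x := forall a, a \in x -> reduced a.1.1.

Lemma translates_on_tree (I : eqType) (s : seq I) (g : I -> seq (dedge E)) (x : I -> C) :
  on_tree (flatten [seq cact (g j) (x j) | j <- s]).
Proof. by move=> a /flatten_mapP [j _] /mapP [b _ ->]; apply: red_reduced. Qed.

Lemma sumL_nil H : sumL [::] H = 0. Proof. by rewrite /sumL big_nil. Qed.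

Lemma sumL_cons a x H : sumL (a :: x) H = a.2 * H a.1 + sumL x H.
Proof. by rewrite /sumL big_cons. Qed.

Lemma sumL_cat x y H : sumL (x ++ y) H = sumL x H + sumL y H.
Proof. by rewrite /sumL big_cat. Qed.

Lemma sumL_cscale c x H : sumL (cscale c x) H = c * sumL x H.
Proof. by rewrite /sumL big_map mulr_sumr; apply: eq_bigr => a _ /=; rewrite mulrA. Qed.

Lemma sumL_cact g x H : sumL (cact g x) H = sumL x (fun s => H (act g s.1, s.2)).
Proof. by rewrite /sumL big_map. Qed.

Lemma sumL_projH HE x H :
  sumL (projH HE x) H = sumL x (fun s => if s.2 \notin HE then H s else 0).
Proof.
rewrite /sumL big_filter big_mkcond; apply: eq_bigr => a _.
by case: ifP => _; rewrite ?mulr0.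
Qed.

Lemma sumL_flatten (I : Type) (G : I -> C) l H :
  sumL (flatten (map G l)) H = \sum_(j <- l) sumL (G j) H.
Proof.
elim: l => [|i l IH]; first by rewrite big_nil sumL_nil.
by rewrite /= sumL_cat IH big_cons.
Qed.

Lemma sumL_ext x H1 H2 : (forall a, a \in x -> H1 a.1 = H2 a.1) -> sumL x H1 = sumL x H2.
Proof. by move=> h; rewrite /sumL; apply: eq_big_seq => a /h ->. Qed.

Lemma sumL0 x : sumL x (fun _ => 0) = 0.
Proof. by rewrite /sumL big1 // => a _; rewrite mulr0. Qed.

Lemma coefS x t : coef x t = sumL x (fun s => (s == t)%:R).
Proof.
rewrite /coef /sumL big_mkcond; apply: eq_bigr => a _.
by case: eqP => _; rewrite ?mulr1 ?mulr0.
Qed.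

Lemma coef_notin x t : t \notin map fst x -> coef x t = 0.
Proof.
move=> Ht; rewrite /coef big_seq_cond big1 // => a /andP[Ha /eqP Ea].
by move: Ht; rewrite -Ea map_f.
Qed.

Lemma norm2_L (L : seq T) x : uniq L -> {subset map fst x <= L} ->
  norm2 x = \sum_(t <- L) coef x t ^+ 2.
Proof.
move=> UL HL; rewrite /norm2.
rewrite [RHS](bigID (fun t => t \in map fst x)) /= [X in _ + X]big1 ?addr0; last first.
  by move=> t /coef_notin ->; rewrite expr0n.
rewrite -[RHS]big_filter; apply: perm_big; apply: uniq_perm.
- exact: undup_uniq.
- exact: filter_uniq.
move=> t; rewrite mem_undup mem_filter; case Ht: (t \in map fst x) => //=.
by rewrite HL.
Qed.

Lemma norm2_ge0 x : 0 <= norm2 x.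
Proof. by apply: sumr_ge0 => t _; apply: sqr_ge0. Qed.

Lemma sum_sub_le (S L : seq T) (F : T -> rat) : uniq S -> uniq L -> {subset S <= L} ->
  (forall t, 0 <= F t) -> \sum_(t <- S) F t <= \sum_(t <- L) F t.
Proof.
move=> US UL HSL HF.
rewrite [leRHS](bigID (fun t => t \in S)) /= -[leLHS]addr0.
apply: lerD; last by apply: sumr_ge0.
rewrite le_eqVlt; apply/orP; left; apply/eqP.
rewrite -[RHS]big_filter; apply: perm_big; apply: uniq_perm => //; first exact: filter_uniq.
by move=> t; rewrite mem_filter; case Ht: (t \in S) => //=; rewrite HSL.
Qed.

Lemma sum_le_norm2 (S : seq T) x : uniq S -> \sum_(t <- S) coef x t ^+ 2 <= norm2 x.
Proof.
move=> US; set L := undup (map fst x ++ S).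
rewrite (@norm2_L L) ?undup_uniq //; last by move=> t Ht; rewrite mem_undup mem_cat Ht.
apply: sum_sub_le => //; first exact: undup_uniq.
- by move=> t Ht; rewrite mem_undup mem_cat Ht orbT.
- by move=> t; apply: sqr_ge0.
Qed.

End Chains.


(* Chains of lifted edge paths in the universal cover. *)
Section PathChains.
Variable E : finType.
Notation D := (dedge E).
Notation T := (tedge E).
Implicit Types (d : D) (w a b p : seq D).

Definition wpos p a := foldl (fun p d => red (rcons p d)) p a.

Lemma wchain_cat p a b : wchain p (a ++ b) = wchain p a ++ wchain (wpos p a) b.
Proof. by elim: a p => [|d a IH] p //=; rewrite IH. Qed.

Lemma wpos_red p a : reduced p -> wpos p a = red (p ++ a).
Proof.
elim: a p => [|d a IH] p Hp /=; first by rewrite cats0 red_id.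
by rewrite IH ?red_reduced // redLK cat_rcons.
Qed.

Lemma wchain_act g p w : wchain (act g p) w = cact g (wchain p w).
Proof.
elim: w p => [|d w IH] p //=.
have -> : red (rcons (act g p) d) = act g (red (rcons p d)).
  by rewrite /act -!cats1 redLK redRK catA.
by rewrite IH; case: ifP.
Qed.

Lemma wchain_cancel p a d b : reduced p ->
  ceq (wchain p (a ++ d :: dinv d :: b)) (wchain p (a ++ b)).
Proof.
move=> Hp H; rewrite !wchain_cat !sumL_cat wpos_red //; congr (_ + _).
set q := red (p ++ a).
have Eq : red (rcons (red (rcons q d)) (dinv d)) = q.
  rewrite -!cats1 redLK -catA /= -(cats0 [:: d; dinv d]) (red_cancel q d [::]) cats0.
  exact/red_id/red_reduced.
by rewrite /= Eq; case: d Eq => e [] Eq /=; rewrite !sumL_cons /=; ring.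
Qed.

Lemma wchain_red p w : reduced p -> ceq (wchain p (red w)) (wchain p w).
Proof.
move=> Hp H; apply: (@red_invariant _ _ (fun w => sumL (wchain p w) H)) => a d b.
exact: wchain_cancel.
Qed.

Lemma wchain_winv p w : reduced p ->
  ceq (wchain p (winv w)) (cscale (-1) (wchain (red (p ++ winv w)) w)).
Proof.
move=> Hp H; have := wchain_red (winv w ++ w) Hp H.
rewrite red_winvL wchain_cat sumL_cat wpos_red // sumL_cscale /= sumL_nil.
by move=> h; rewrite -[sumL (wchain p _) H]subr0 h; ring.
Qed.

Lemma wchain_keys p w (a : T * rat) : a \in wchain p w -> exists2 d, d \in w & a.1.2 = d.1.
Proof.
elim: w p => [|d w IH] p //=; rewrite inE => /orP[/eqP ->|].
  by exists d; rewrite ?inE ?eqxx //; case: ifP.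
by move=> /IH [d' Hd' ->]; exists d'; rewrite // inE Hd' orbT.
Qed.

Lemma wchain_on_tree p w : reduced p -> on_tree (wchain p w).
Proof.
elim: w p => [|d w IH] p Hp a //=; rewrite inE => /orP[/eqP ->|].
  by case: ifP => _ //=; apply: red_reduced.
by apply: IH; apply: red_reduced.
Qed.

End PathChains.


(* The lift tilde f and the chain map A_f. *)
Section LiftOfF.
Variable E : finType.
Notation D := (dedge E).
Notation T := (tedge E).
Notation C := (chain E).
Variables (fE : E -> seq D) (gam : seq D).
Implicit Types (d : D) (w a b p : seq D).

Definition img d := if d.2 then fE d.1 else winv (fE d.1).

Lemma fw_cons d w : fw fE (d :: w) = img d ++ fw fE w. Proof. by []. Qed.

Lemma fw_cat a b : fw fE (a ++ b) = fw fE a ++ fw fE b.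
Proof. by rewrite /fw map_cat flatten_cat. Qed.

Lemma img_dinv d : img (dinv d) = winv (img d).
Proof. by case: d => e [] //=; rewrite /img /= winvK. Qed.

Lemma fw_winv w : fw fE (winv w) = winv (fw fE w).
Proof.
elim: w => [|d w IH] //.
by rewrite winv_cons fw_cat IH fw_cons /= cats0 img_dinv winv_cat.
Qed.

Lemma red_fw a w : red (a ++ fw fE (red w)) = red (a ++ fw fE w).
Proof.
apply: (@red_invariant _ _ (fun w => red (a ++ fw fE w))) => x d y.
rewrite !fw_cat !fw_cons img_dinv !catA -(catA _ (img d)) -(catA (a ++ fw fE x)).
by rewrite -(catA (img d)) red_cancelR.
Qed.

Lemma ftilde_act g p : ftilde fE gam (act g p) = act (Phi fE gam g) (ftilde fE gam p).
Proof.
rewrite /ftilde /act /Phi (red_fw gam (g ++ p)) fw_cat redLK redRK -!catA.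
by have := red_cancelL (gam ++ fw fE g) gam (fw fE p); rewrite -!catA => ->.
Qed.

Lemma ftilde_next p d : red (ftilde fE gam p ++ img d) = ftilde fE gam (red (rcons p d)).
Proof. by rewrite /ftilde redLK red_fw -cats1 fw_cat fw_cons cats0 catA. Qed.

Definition Wf (s : T) : C := wchain (ftilde fE gam s.1) (fE s.2).

Lemma sumL_Af x H : sumL (Af fE gam x) H = sumL x (fun s => sumL (Wf s) H).
Proof.
rewrite /Af sumL_flatten /sumL; apply: eq_bigr => a _.
by rewrite -/(sumL _ _) sumL_cscale.
Qed.

Lemma Wf_act g s : Wf (act g s.1, s.2) = cact (Phi fE gam g) (Wf s).
Proof. by rewrite /Wf /= ftilde_act wchain_act. Qed.

Lemma Af_wchain p w : reduced p ->
  ceq (Af fE gam (wchain p w)) (wchain (ftilde fE gam p) (fw fE w)).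
Proof.
have ftr q : reduced (ftilde fE gam q) by apply: red_reduced.
elim: w p => [|d w IH] p Hp H //=.
rewrite fw_cons wchain_cat sumL_cat wpos_red // ftilde_next.
rewrite -/(Af fE gam _) sumL_cat -IH ?red_reduced //; congr (_ + _).
rewrite sumL_cscale; case: d => e [] /=; first by rewrite mul1r.
by rewrite (wchain_winv _ (ftr p)) sumL_cscale -ftilde_next.
Qed.

Lemma Af_seg u v : reduced u -> ftilde fE gam u = u -> ftilde fE gam v = v ->
  ceq (Af fE gam (seg u v)) (seg u v).
Proof.
move=> Hu Fu Fv H; rewrite /seg Af_wchain // Fu -(wchain_red _ Hu).
rewrite (red_fw [::]) /=; congr (sumL (wchain u _) H).
rewrite -{2}Fu -{2}Fv /ftilde red_winv_red redRK winv_cat -catA red_cancelL.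
by rewrite fw_cat fw_winv.
Qed.

End LiftOfF.


(* The relative map A_{f,H}: it fixes rho and acts on translates of rho
   through Phi_f. *)
Section RelativeMap.
Variable E : finType.
Notation D := (dedge E).
Notation T := (tedge E).
Notation C := (chain E).
Variables (HE : {set E}) (fE : E -> seq D) (gam : seq D).

Definition projf (H : T -> rat) := fun t : T => if t.2 \notin HE then H t else 0.

Lemma sumL_AfH x H :
  sumL (AfH HE fE gam x) H = sumL x (fun s => sumL (Wf fE gam s) (projf H)).
Proof. by rewrite /AfH sumL_projH sumL_Af. Qed.

Lemma AfH_on_tree x : on_tree (AfH HE fE gam x).
Proof.
move=> a; rewrite mem_filter => /andP[_] /flatten_mapP [b _] /mapP [c hc ->] /=.
exact: (wchain_on_tree (red_reduced _) hc).
Qed.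

Lemma iter_AfH_on_tree k x : on_tree x -> on_tree (iter k (AfH HE fE gam) x).
Proof. by case: k => [|k] //= _; apply: AfH_on_tree. Qed.

(* Edges of H are mapped into H, so they contribute nothing after projection. *)
Lemma Wf_H s H : (forall e, e \in HE -> all (fun d => d.1 \in HE) (fE e)) ->
  s.2 \in HE -> sumL (Wf fE gam s) (projf H) = 0.
Proof.
move=> HfEH Hs; rewrite -(sumL0 (Wf fE gam s)).
apply: sumL_ext => a /wchain_keys [d Hd Ea].
by have /allP /(_ d Hd) Hd1 := HfEH _ Hs; rewrite /projf Ea Hd1.
Qed.

Lemma AfH_rho u v : (forall e, e \in HE -> all (fun d => d.1 \in HE) (fE e)) ->
  reduced u -> ftilde fE gam u = u -> ftilde fE gam v = v ->
  ceq (AfH HE fE gam (projH HE (seg u v))) (projH HE (seg u v)).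
Proof.
move=> HfEH Hu Fu Fv H; rewrite sumL_AfH sumL_projH.
rewrite (sumL_ext (H2 := fun s => sumL (Wf fE gam s) (projf H))); last first.
  by move=> a _; case: ifP => // /negbFE /(Wf_H H HfEH) ->.
by rewrite -sumL_Af Af_seg // sumL_projH.
Qed.

Lemma iter_AfH_translates (rho : C) (r : nat) (g : 'I_r -> seq D) (q : 'I_r -> rat) :
  ceq (AfH HE fE gam rho) rho -> forall k H,
  sumL (iter k (AfH HE fE gam)
          (flatten [seq cact (g j) (cscale (q j) rho) | j <- enum 'I_r])) H =
  \sum_(j <- enum 'I_r) q j * sumL rho (fun s => H (act (iter k (Phi fE gam) (g j)) s.1, s.2)).
Proof.
move=> Hrho; elim=> [|k IH] H /=.
  by rewrite sumL_flatten; apply: eq_bigr => j _; rewrite sumL_cact sumL_cscale.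
rewrite sumL_AfH IH; apply: eq_bigr => j _; congr (_ * _).
rewrite -[RHS]Hrho sumL_AfH; apply: sumL_ext => a _ /=.
by rewrite (Wf_act fE gam _ a.1) sumL_cact; apply: sumL_ext.
Qed.

End RelativeMap.


Lemma sqr_sum_le (I : Type) (J : seq I) (a : I -> rat) :
  (\sum_(j <- J) a j) ^+ 2 <= (size J)%:R * \sum_(j <- J) a j ^+ 2.
Proof.
elim: J => [|i J IH]; first by rewrite !big_nil expr0n mul0r.
rewrite !big_cons /= -natr1.
have HQ : 0 <= \sum_(j <- J) a j ^+ 2 by apply: sumr_ge0 => j _; apply: sqr_ge0.
move: IH HQ; set S := \sum_(j <- J) a j; set Q := \sum_(j <- J) _; set n := (size J)%:R.
have Hn : 0 <= n by rewrite /n ler0n.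
move=> h1 h2; have [n0|npos] := eqVneq n 0.
  have S0 : S = 0 by apply/eqP; rewrite -sqrf_eq0 eq_le sqr_ge0 andbT -(mul0r Q) -n0.
  by rewrite S0 n0; nra.
have npos' : 0 < n by rewrite lt_neqAle eq_sym npos Hn.
have key : 0 <= n * a i ^+ 2 + Q - 2 * a i * S.
  by rewrite -(pmulr_rge0 _ npos'); have := sqr_ge0 (n * a i - S); nra.
nra.
Qed.


(* Step (3): the two bounds for y = sum_j q_j h_j rho, h_j pairwise distinct. *)
Section Bounds.
Variable E : finType.
Notation D := (dedge E).
Notation T := (tedge E).
Notation C := (chain E).
Variables (rho y : C) (r : nat) (h : 'I_r -> seq D) (q : 'I_r -> rat).
Hypothesis Hy : forall H, sumL y H =
  \sum_(j <- enum 'I_r) q j * sumL rho (fun s => H (act (h j) s.1, s.2)).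
Hypothesis rho_tree : on_tree rho.
Hypothesis hred : forall j, reduced (h j).
Hypothesis hinj : injective h.

Definition coef_back j (t : T) := coef rho (act (winv (h j)) t.1, t.2).

Lemma coef_y (t : T) : reduced t.1 -> coef y t = \sum_(j <- enum 'I_r) q j * coef_back j t.
Proof.
move=> ht; rewrite coefS Hy; apply: eq_bigr => j _; congr (_ * _).
rewrite /coef_back coefS; apply: sumL_ext => a /rho_tree ha.
by case: t ht => t1 t2 /= ht; rewrite !xpair_eqE act_eq_iff.
Qed.

(* Lower bound: at h_j t0 only the j-th translate contributes. *)
Lemma lower_bound (t0 : T) : coef rho t0 ^+ 2 = 1 ->
  (forall i j, i != j -> coef rho (act (red (winv (h i) ++ h j)) t0.1, t0.2) = 0) ->
  \sum_(j < r) q j ^+ 2 <= norm2 y.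
Proof.
move=> hc hz.
have ht0 : reduced t0.1.
  have : t0 \in map fst rho.
    apply: contraT => /coef_notin e.
    by move: hc; rewrite e expr0n => /eqP; rewrite eq_sym oner_eq0.
  by case/mapP => a /rho_tree ha ->.
set S := [seq (act (h j) t0.1, t0.2) | j <- enum 'I_r].
have US : uniq S.
  rewrite map_inj_uniq ?enum_uniq // => i j [] /act_eq_red.
  by rewrite !red_id // => /hinj.
apply: le_trans (sum_le_norm2 y US); rewrite big_map -big_enum /= le_eqVlt.
apply/orP; left; apply/eqP; apply: eq_bigr => j _.
rewrite coef_y /=; last exact: red_reduced.
rewrite (bigD1_seq j) ?mem_enum ?enum_uniq //= big1_seq ?addr0.
  by rewrite /coef_back act_comp red_winvL /act /= red_id // exprMn hc mulr1.
by move=> i /andP[ne _]; rewrite /coef_back act_comp hz ?mulr0.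
Qed.

Definition supp_size := size (undup (map fst rho)).

(* At most supp_size translates of rho meet a given edge t. *)
Lemma coef_y_sqr_le (t : T) : reduced t.1 ->
  coef y t ^+ 2 <= supp_size%:R * \sum_(j <- enum 'I_r) q j ^+ 2 * coef_back j t ^+ 2.
Proof.
move=> ht; rewrite coef_y //.
set J := [seq j <- enum 'I_r | coef_back j t != 0].
have e1 : \sum_(j <- enum 'I_r) q j * coef_back j t = \sum_(j <- J) q j * coef_back j t.
  rewrite /J [RHS]big_filter [RHS]big_mkcond /=; apply: eq_bigr => j _.
  by case: eqP => // ->; rewrite mulr0.
have e2 : \sum_(j <- enum 'I_r) q j ^+ 2 * coef_back j t ^+ 2 =
          \sum_(j <- J) (q j * coef_back j t) ^+ 2.
  rewrite /J [RHS]big_filter [RHS]big_mkcond /=; apply: eq_bigr => j _.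
  by case: eqP => [->|_]; rewrite ?expr0n ?mulr0 // exprMn.
rewrite e1 e2; apply: le_trans (sqr_sum_le _ _) _.
apply: ler_wpM2r; first by apply: sumr_ge0 => j _; apply: sqr_ge0.
rewrite ler_nat -(size_map (fun j => (act (winv (h j)) t.1, t.2))).
apply: uniq_leq_size.
  rewrite map_inj_in_uniq; first by rewrite filter_uniq // enum_uniq.
  by move=> i j _ _ [] /act_eq_red /winv_red_inj e; apply/hinj/e.
move=> s /mapP [j]; rewrite mem_filter => /andP[hj _] ->.
by rewrite mem_undup; apply: contraR hj => /coef_notin; rewrite /coef_back => ->.
Qed.

Lemma upper_bound : on_tree y -> norm2 y <= supp_size%:R * norm2 rho * \sum_(j < r) q j ^+ 2.
Proof.
move=> y_tree; set L := undup (map fst y).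
have HL t : t \in L -> reduced t.1 by rewrite mem_undup => /mapP [a /y_tree ha ->].
apply: le_trans
  (_ : \sum_(t <- L) supp_size%:R * \sum_(j <- enum 'I_r) q j ^+ 2 * coef_back j t ^+ 2 <= _).
  rewrite /norm2 -/L [X in X <= _]big_seq [X in _ <= X]big_seq.
  by apply: ler_sum => t /HL /coef_y_sqr_le.
rewrite -mulr_sumr -mulrA ler_wpM2l ?ler0n // exchange_big /= big_enum /= mulr_sumr.
apply: ler_sum => j _; rewrite -mulr_sumr mulrC ler_wpM2r ?sqr_ge0 //.
rewrite -(big_map (fun t => (act (winv (h j)) t.1, t.2)) predT (fun s => coef rho s ^+ 2)).
apply: sum_le_norm2; rewrite map_inj_in_uniq ?undup_uniq // => t t' /HL ht /HL ht' [e1 e2].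
have : act (h j) (act (winv (h j)) t.1) = act (h j) (act (winv (h j)) t'.1) by rewrite e1.
rewrite !act_Kinv // => e3.
by case: t t' e2 e3 {ht ht' e1} => a b [a' b'] /= -> ->.
Qed.

End Bounds.


Unset Implicit Arguments. Set Strict Implicit.
Theorem lemma5p2
  (V E : finType) (src tgt : E -> V) (v0 : V)
  (HV : {set V}) (HE : {set E})
  (fV : V -> V) (fE : E -> seq (dedge E)) (gam : seq (dedge E))
  (u v : seq (dedge E)) :
  (* Gamma finite connected graph *)
  connected_graph src tgt ->
  (* H is a subgraph *)
  (forall e, e \in HE -> (src e \in HV) && (tgt e \in HV)) ->
  (* f cellular, edge-linear: each edge goes to an edge path *)
  (forall e, is_walk src tgt (fV (src e)) (fV (tgt e)) (fE e)) ->
  (* f(H) subset H *)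
  (forall w, w \in HV -> fV w \in HV) ->
  (forall e, e \in HE -> all (fun d => d.1 \in HE) (fE e)) ->
  (* the fixed lift tilde f, given by a path gam from v0 to f(v0) *)
  is_walk src tgt v0 (fV v0) gam ->
  (* f is a homotopy equivalence: Phi_f : pi_1(Gamma,v0) -> pi_1(Gamma,v0)
     is bijective *)
  (forall g h, Fgrp src tgt v0 g -> Fgrp src tgt v0 h ->
     Phi fE gam g = Phi fE gam h -> g = h) ->
  (forall h, Fgrp src tgt v0 h -> exists g, Fgrp src tgt v0 g /\ Phi fE gam g = h) ->
  (* u, v vertices of the universal cover fixed by tilde f *)
  tvert src tgt v0 u -> ftilde fE gam u = u ->
  tvert src tgt v0 v -> ftilde fE gam v = v ->
  (* non-geometricity of rho = pi_H^perp([u, v]) *)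
  (exists t : tedge E, t.2 \notin HE /\
     (coef (projH HE (seg u v)) t = 1 \/ coef (projH HE (seg u v)) t = -1) /\
     (forall g, Fgrp src tgt v0 g -> g != [::] ->
        coef (projH HE (seg u v)) (act g t.1, t.2) = 0)) ->
  exists B : rat, 1 <= B /\
    forall (r : nat) (g : 'I_r -> seq (dedge E)) (q : 'I_r -> rat),
      (forall j, Fgrp src tgt v0 (g j)) -> injective g ->
      forall k : nat,
        let x := flatten [seq cact (g j) (cscale (q j) (projH HE (seg u v)))
                         | j <- enum 'I_r] in
        let y := iter k (AfH HE fE gam) x in
        \sum_(j < r) q j ^+ 2 <= norm2 y /\ norm2 y <= B * \sum_(j < r) q j ^+ 2.
Proof.
move=> _ _ HfE _ HfEH Hgam Pinj _ /andP[_ Hu] Fu _ Fv [t0 [_ [t0c t0z]]].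
set rho := projH HE (seg u v).
have rho_tree : on_tree rho.
  by move=> a; rewrite mem_filter => /andP[_]; apply: wchain_on_tree.
exists (1 + (supp_size rho)%:R * norm2 rho); split.
  by rewrite lerDl mulr_ge0 ?ler0n ?norm2_ge0.
move=> r g q Hg ginj k x y.
set h := fun j => iter k (Phi fE gam) (g j).
have hF j : Fgrp src tgt v0 (h j) by apply: iter_Phi_Fgrp.
have hred j : reduced (h j) by have /FgrpP [] := hF j.
have hinj : injective h by move=> i j /(iter_Phi_inj HfE Hgam Pinj (Hg i) (Hg j)) /ginj.
have Hy := iter_AfH_translates g q (AfH_rho HfEH Hu Fu Fv) k.
split.
- apply: (lower_bound Hy rho_tree hred hinj (t0 := t0)).
    by case: t0c => ->; rewrite ?sqrrN expr1n.
  move=> i j ne; apply: t0z; first exact: diff_Fgrp (hF i) (hF j).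
  by apply/eqP => /(red_winv_nil (hred i) (hred j)) /hinj /eqP; rewrite (negPf ne).
- apply: le_trans (upper_bound Hy rho_tree hred hinj _) _.
    exact/iter_AfH_on_tree/translates_on_tree.
  by rewrite ler_wpM2r ?lerDr // sumr_ge0 // => j _; apply: sqr_ge0.
Qed.
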